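(* In the Biggs-Smith graph $\mathrm{BS}$, every path of length at most $7$ contained in the $a$-cycle is a geodesic (a shortest path between its endpoints).
   Context: The Biggs-Smith graph $\mathrm{BS}$ is the cubic graph on the $102$ vertices $ia,ib,ic,id,ie,if$ for $i\in\{1,\dots,17\}$ (indices taken modulo 17, with $0$ written as $17$), whose edges are: $ie\,ia$, $ie\,ib$, $ie\,if$, $if\,ic$, $if\,id$ for each $i$; and $ia\,(i+1)a$, $ib\,(i+4)b$, $ic\,(i+2)c$, $id\,(i+8)d$ for each $i$. The $a$-cycle is the $17$-cycle $1a,2a,\dots,17a,1a$ formed by the edges $ia\,(i+1)a$. *)

From mathcomp Require Import all_boot.
Set Implicit Arguments. Unset Strict Implicit. Unset Printing Implicit Defensive.

(* Vertices of the Biggs-Smith graph: pairs (i, l) with i : 'I_17 the index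
   (index 17 of the paper is represented by 0; all index arithmetic is mod 17)
   and l : 'I_6 the letter, encoded a=0, b=1, c=2, d=3, e=4, f=5. *)
Definition bs_vertex := ('I_17 * 'I_6)%type.

Definition la := 0. Definition lb := 1. Definition lc := 2.
Definition ld := 3. Definition le := 4. Definition lf := 5.

(* One orientation of each edge listed in the paper. *)
Definition bs_arc (u v : bs_vertex) : bool :=
  let: (i, l) := u in let: (j, m) := v in
  [|| (l == le :> nat) && (m == la :> nat) && (i == j),
      (l == le :> nat) && (m == lb :> nat) && (i == j),
      (l == le :> nat) && (m == lf :> nat) && (i == j),
      (l == lf :> nat) && (m == lc :> nat) && (i == j),
      (l == lf :> nat) && (m == ld :> nat) && (i == j),
      (l == la :> nat) && (m == la :> nat) && (j == (i + 1) %% 17 :> nat),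
      (l == lb :> nat) && (m == lb :> nat) && (j == (i + 4) %% 17 :> nat),
      (l == lc :> nat) && (m == lc :> nat) && (j == (i + 2) %% 17 :> nat)
    | (l == ld :> nat) && (m == ld :> nat) && (j == (i + 8) %% 17 :> nat)].

Definition bs_adj (u v : bs_vertex) : bool := bs_arc u v || bs_arc v u.

Definition acycle_adj (u v : bs_vertex) : bool :=
  let: (i, l) := u in let: (j, m) := v in
  (l == la :> nat) && (m == la :> nat) &&
  ((j == (i + 1) %% 17 :> nat) || (i == (j + 1) %% 17 :> nat)).

Definition bs_geodesic (x : bs_vertex) (p : seq bs_vertex) : Prop :=
  path bs_adj x p /\
  forall q : seq bs_vertex, path bs_adj x q -> last x q = last x p ->
    size p <= size q.

From mathcomp Require Import all_boot.
Set Implicit Arguments. Unset Strict Implicit. Unset Printing Implicit Defensive.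

(* A walk of length m from x never leaves the ball of radius m around x, and
   balls are computable by breadth-first expansion of neighbour lists.  Hence
   a walk ending at y has length at least n as soon as y lies outside the ball
   of radius n - 1 around x, and it suffices to check by computation that every
   simple path of length n <= 7 in the a-cycle leaves the ball of radius n - 1
   around its starting vertex. *)

Section Balls.
Variables (T : eqType) (nbrs : T -> seq T).

Definition ball (n : nat) (x : T) : seq T :=
  iter n (fun B => undup (B ++ flatten (map nbrs B))) [:: x].

Fixpoint walks (n : nat) (x : T) : seq (seq T) :=
  if n is n'.+1 then [seq y :: q | y <- nbrs x, q <- walks n' y] else [:: [::]].

Lemma ball_subset_succ n x : {subset ball n x <= ball n.+1 x}.
Proof. by move=> u u_in; rewrite /= mem_undup mem_cat u_in. Qed.

Lemma ball_monotone m n x : m <= n -> {subset ball m x <= ball n x}.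
Proof.
move=> /subnK <-; elim: (n - m) => [//|k IHk] u /IHk.
by rewrite addSn; apply: ball_subset_succ.
Qed.

Lemma nbrs_in_ball_succ n x u v :
  u \in ball n x -> v \in nbrs u -> v \in ball n.+1 x.
Proof.
move=> u_in v_nbr; rewrite /= mem_undup mem_cat; apply/orP; right.
by apply/flattenP; exists (nbrs u); rewrite // map_f.
Qed.

Variable e : rel T.
Hypothesis nbrsP : forall u v, e u v -> v \in nbrs u.

Lemma last_path_in_ball x q : path e x q -> last x q \in ball (size q) x.
Proof.
elim/last_ind: q => [|q y IHq]; first by rewrite inE.
rewrite rcons_path last_rcons size_rcons => /andP[/IHq last_in /nbrsP].
exact: nbrs_in_ball_succ.
Qed.

Lemma path_size_gt x q n : path e x q -> last x q \notin ball n x -> n < size q.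
Proof.
move=> e_q; apply: contraNT; rewrite -leqNgt => q_le.
exact: ball_monotone q_le _ (last_path_in_ball e_q).
Qed.

Lemma path_in_walks x p : path e x p -> p \in walks (size p) x.
Proof.
elim: p x => [|y q IHq] x /=; first by rewrite inE.
by case/andP=> /nbrsP y_nbr /IHq q_in; apply/allpairsPdep; exists y, q.
Qed.

End Balls.

(* [enum 'I_n] and [inord] do not reduce under [vm_compute], since [insub] goes
   through the opaque [idP]; ordinals built from [ltn_pmod] do. *)
Definition ord_mod n (n_gt0 : 0 < n) (k : nat) : 'I_n := Ordinal (ltn_pmod k n_gt0).

Definition ordinals n (n_gt0 : 0 < n) : seq 'I_n := mkseq (ord_mod n_gt0) n.

Lemma mem_ordinals n (n_gt0 : 0 < n) (i : 'I_n) : i \in ordinals n_gt0.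
Proof.
apply/mapP; exists (val i); first by rewrite mem_iota ltn_ord.
by apply: val_inj; rewrite /= modn_small.
Qed.

Definition bs_vertices : seq bs_vertex :=
  [seq (i, l) | i <- ordinals (isT : 0 < 17), l <- ordinals (isT : 0 < 6)].

Lemma mem_bs_vertices v : v \in bs_vertices.
Proof. by case: v => i l; apply/allpairsP; exists (i, l); rewrite !mem_ordinals. Qed.

(* Offsets are taken mod 17: 16, 13, 15 and 9 stand for -1, -4, -2 and -8. *)
Definition bs_nbrs (v : bs_vertex) : seq bs_vertex :=
  let: (i, l) := v in
  let w k m := (ord_mod (isT : 0 < 17) (i + k), ord_mod (isT : 0 < 6) m) in
  match val l with
  | 0 => [:: w 0 le; w 1 la; w 16 la]
  | 1 => [:: w 0 le; w 4 lb; w 13 lb]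
  | 2 => [:: w 0 lf; w 2 lc; w 15 lc]
  | 3 => [:: w 0 lf; w 8 ld; w 9 ld]
  | 4 => [:: w 0 la; w 0 lb; w 0 lf]
  | _ => [:: w 0 le; w 0 lc; w 0 ld]
  end.

Lemma bs_nbrsP u v : bs_adj u v -> v \in bs_nbrs u.
Proof.
have : all (fun u => all (fun v => bs_adj u v ==> (v \in bs_nbrs u)) bs_vertices)
         bs_vertices by vm_compute.
by move=> /allP/(_ u (mem_bs_vertices u))/allP/(_ v (mem_bs_vertices v))/implyP.
Qed.

Lemma acycle_sub_bs : subrel acycle_adj bs_adj.
Proof.
move=> [i l] [j m] /andP[/andP[/eqP l_a /eqP m_a] /orP[] step];
  by rewrite /bs_adj /bs_arc /= l_a m_a step !orbT.
Qed.

Definition acycle_nbrs (v : bs_vertex) : seq bs_vertex :=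
  [seq u <- bs_nbrs v | acycle_adj v u].

Lemma acycle_nbrsP u v : acycle_adj u v -> v \in acycle_nbrs u.
Proof. by move=> uv; rewrite mem_filter uv bs_nbrsP ?acycle_sub_bs. Qed.

Lemma simple_acycle_walks_leave_ball :
  all (fun x => all (fun n =>
         all (fun p => last x p \notin ball bs_nbrs n.-1 x)
             [seq p <- walks acycle_nbrs n x | uniq (x :: p)])
       (iota 1 7))
      bs_vertices.
Proof. by vm_compute. Qed.

Lemma simple_acycle_path_leaves_ball x p :
  path acycle_adj x p -> uniq (x :: p) -> 0 < size p -> size p <= 7 ->
  last x p \notin ball bs_nbrs (size p).-1 x.
Proof.
move=> a_p uniq_p p_gt0 p_le7.
move/allP: simple_acycle_walks_leave_ball => /(_ x (mem_bs_vertices x)) /allP.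
move=> /(_ (size p)); rewrite mem_iota p_gt0 add1n ltnS => /(_ p_le7) /allP.
by apply; rewrite mem_filter uniq_p (path_in_walks acycle_nbrsP).
Qed.

Theorem lemma2p5 (x : bs_vertex) (p : seq bs_vertex) :
  path acycle_adj x p -> uniq (x :: p) -> size p <= 7 ->
  bs_geodesic x p.
Proof.
move=> a_p uniq_p p_le7; split; first exact: (sub_path acycle_sub_bs) a_p.
move=> q bs_q last_q; case: (posnP (size p)) => [-> // | p_gt0].
have p_far := simple_acycle_path_leaves_ball a_p uniq_p p_gt0 p_le7.
by rewrite -(prednK p_gt0); apply: (path_size_gt bs_nbrsP bs_q); rewrite last_q.
Qed.
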